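(* Let $\{f_n, n\in\mathbb{N}\}\subset\mathcal{L}$, where $f_n(z)=C_nz^{l_n}e^{\alpha_nz}\prod_{j\ge1}(1+\beta_j(n)z)$, and put $\mu_1(n)=\sum_{j\ge1}\beta_j(n)$. Suppose there exist $a>0$, $C>0$ and $l\in\mathbb{N}_0$ such that for all $n$: $|\alpha_n|+\mu_1(n)\le a$, $|C_n|\le C$, $l_n\le l$. Then $\{f_n\}$ is bounded in $\mathcal{A}_a$, i.e. $\sup_n\|f_n\|_b<\infty$ for every $b>a$.
   Context: $\mathcal{L}$ is the set of entire functions $f(z)=Cz^le^{\alpha z}\prod_{j\ge1}(1+\beta_jz)$ with $C\in\mathbb{C}$, $l\in\mathbb{N}_0$, $\alpha\in\mathbb{R}$, $\beta_j\ge\beta_{j+1}\ge0$, $\sum_j\beta_j<\infty$. For $b>0$, $\|f\|_b=\sup_{k\in\mathbb{N}_0}b^{-k}|f^{(k)}(0)|$; $\mathcal{A}_a$ is the set of entire $f$ with $\|f\|_b<\infty$ for all $b>a$. *)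

From mathcomp Require Import all_boot all_order all_algebra.
From mathcomp Require Import all_classical all_reals all_analysis.
From mathcomp Require Import complex.
Import Order.TTheory GRing.Theory Num.Theory numFieldNormedType.Exports.

Set Implicit Arguments.
Unset Strict Implicit.
Unset Printing Implicit Defensive.

Local Open Scope ring_scope.

(* The complex plane, seen as a numFieldType (hence a normed field with its
   own topology, so that [derive1] is the complex derivative). *)
Definition CC (R : realType) : numFieldType := R[i].

Definition cexp (R : realType) (z : CC R) : CC R :=
  limn (series (fun k : nat => z ^+ k / (k`!)%:R)).

Definition infprod (R : realType) (u : nat -> CC R) : CC R :=
  limn (fun N : nat => \prod_(j < N) u j).

Definition L_beta (R : realType) (beta : nat -> R) : Prop :=
  (forall j, 0 <= beta j) /\ (forall j, beta j.+1 <= beta j) /\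
  cvgn (series beta).

Definition mu1 (R : realType) (beta : nat -> R) : R := limn (series beta).

(* f(z) = C z^l e^{alpha z} prod_j (1 + beta_j z)  (index j starts at 0). *)
Definition Lclass_fun (R : realType) (C : CC R) (l : nat) (alpha : R)
    (beta : nat -> R) : CC R -> CC R :=
  fun z => C * z ^+ l * cexp ((alpha%:C)%C * z) *
           infprod (fun j => 1 + ((beta j)%:C)%C * z).

Definition normb (R : realType) (b : R) (f : CC R -> CC R) : \bar R :=
  ereal_sup [set ((b ^- k) * Normc.normc (derive1n k f 0 : R[i]))%:E | k in [set: nat]].

From mathcomp Require Import all_boot all_order all_algebra.
From mathcomp Require Import all_classical all_reals all_analysis.
From mathcomp Require Import complex ring lra.
Import Order.TTheory GRing.Theory Num.Theory numFieldNormedType.Exports.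
Import Normc.

(* Each such f is the sum of a power series whose coefficients satisfy
   |c_k| <= M b^k / k! with M depending only on C, l, a and b; as
   f^(k)(0) = k! c_k, this bounds b^-k |f^(k)(0)| by M.  The coefficients of
   e^(alpha z) are bounded by |alpha|^k / k!, and multiplying a series by
   (1 + beta z) turns a bound r^k / k! into (r + beta)^k / k!.  Hence every
   partial product, and by Tannery's theorem the whole product, has
   coefficients bounded by (|alpha| + sum_j beta_j)^k / k! <= a^k / k!.
   Multiplying by z^m with m <= l costs at most a factor m! / (b - a)^m. *)

Local Open Scope ring_scope.
Local Open Scope complex_scope.
Local Open Scope classical_set_scope.

Section ComplexModulus.
Context {R : realType}.
Local Notation K := (CC R).
Implicit Types (x y z : K).

Lemma normr_normc z : `|z| = (normc z)%:C.
Proof. by case: z => x y; rewrite normc_def. Qed.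

Lemma normc_ge0 z : 0 <= normc z.
Proof. by case: z => x y /=; rewrite sqrtr_ge0. Qed.

Lemma normcX z n : normc (z ^+ n) = normc z ^+ n.
Proof. by elim: n => [|n IH]; rewrite ?normc1 // !exprS normcM IH. Qed.

Lemma normc_real (x : R) : normc (x%:C : K) = `|x|.
Proof. by rewrite /= expr0n /= addr0 sqrtr_sqr. Qed.

Lemma normc_nat n : normc (n%:R : K) = n%:R.
Proof. by rewrite normcMn normc1. Qed.

Lemma normc_sum m n (u : nat -> K) :
  normc (\sum_(m <= k < n) u k) <= \sum_(m <= k < n) normc (u k).
Proof. exact: (ler_norm_sum (V := Rcomplex R)). Qed.

Lemma normc_le_Re_Im z : normc z <= `|complex.Re z| + `|complex.Im z|.
Proof.
rewrite {1}[z]complexE; apply: le_trans (le_normcD _ _) _.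
by rewrite normcM !normc_real /= expr0n expr1n add0r sqrtr1 mul1r.
Qed.

Lemma normc_Re z : `|complex.Re z| <= normc z.
Proof.
case: z => x y /=.
by rewrite -[`|x|]sqrtr_sqr ler_sqrt ?lerDl ?addr_ge0 ?sqr_ge0.
Qed.

Lemma normc_Im z : `|complex.Im z| <= normc z.
Proof.
case: z => x y /=.
by rewrite -[`|y|]sqrtr_sqr ler_sqrt ?lerDr ?addr_ge0 ?sqr_ge0.
Qed.

Lemma cvg_normcP {T : Type} {F : set_system T} {FF : Filter F} {f : T -> K} {l : K} :
  f @ F --> l <-> forall e : R, 0 < e -> \forall t \near F, normc (l - f t) < e.
Proof.
rewrite cvgrPdist_lt; split=> [fl e e0|fl e].
  by apply: filterS (fl e%:C _) => [t|]; rewrite ?normr_normc ltcR.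
rewrite ltcE => /andP[/eqP/= e_real e0].
have -> : e = (complex.Re e)%:C by case: e e_real e0 => ? ? /= ->.
by apply: filterS (fl _ e0) => t; rewrite normr_normc ltcR.
Qed.

Lemma normc_cvg_le {T : Type} {F : set_system T} {FF : ProperFilter F}
    {f : T -> K} {l : K} {B : R} :
  f @ F --> l -> (\forall t \near F, normc (f t) <= B) -> normc l <= B.
Proof.
move=> /cvg_normcP fl fB; apply/ler_addgt0Pr => e e0.
have [t [flt ftB]] := filter_ex (filterI (fl e e0) fB).
rewrite -(subrK (f t) l) addrC; apply: le_trans (le_normcD _ _) _.
by rewrite lerD // ltW.
Qed.

Lemma cvg_series_normc (u : nat -> K) :
  cvgn (series (fun k => normc (u k))) -> cvgn (series u).
Proof.
move=> cu.
have abs_cvg (v : nat -> R) : (forall k, `|v k| <= normc (u k)) -> cvgn (series v).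
  move=> vu; apply: normed_cvg.
  by apply: series_le_cvg cu => // k; [exact: normr_ge0 | exact: normc_ge0].
have /cvgrPdist_lt cRe := abs_cvg _ (fun k => normc_Re (u k)).
have /cvgrPdist_lt cIm := abs_cvg _ (fun k => normc_Im (u k)).
apply/cvg_ex; exists (limn (series (fun k => complex.Re (u k)))
  +i* limn (series (fun k => complex.Im (u k)))).
apply/cvg_normcP => e e0; near=> n.
apply: le_lt_trans (normc_le_Re_Im _) _; rewrite (splitr e).
rewrite !(raddfB (@complex.Re R : Rcomplex R -> R)).
rewrite !(raddfB (@complex.Im R : Rcomplex R -> R)).
rewrite /series /= (raddf_sum (@complex.Re R : Rcomplex R -> R)).
rewrite (raddf_sum (@complex.Im R : Rcomplex R -> R)).
by apply: ltrD; near: n; [apply: cRe | apply: cIm]; rewrite divr_gt0.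
Unshelve. all: by end_near.
Qed.

End ComplexModulus.

Section ExpBoundedSeries.
Context {R : realType}.
Local Notation K := (CC R).
Implicit Types (c : nat -> K) (z : K) (M r : R).

Definition cpseries c z := [series c k * z ^+ k]_k.

Definition cpsum c z := limn (cpseries c z).

Lemma cpseriesSr c z n : cpseries c z n.+1 = cpseries c z n + c n * z ^+ n.
Proof. exact: seriesSr. Qed.

Definition exp_bounded M r c :=
  0 <= r /\ forall k, normc (c k) <= M * exp_coeff r k.

Lemma exp_coeffM (x y : R) k : exp_coeff (x * y) k = exp_coeff x k * y ^+ k.
Proof. by rewrite /exp_coeff /= exprMn mulrAC. Qed.

Lemma exp_bounded_ge0 {M r c} : exp_bounded M r c -> 0 <= M.
Proof.
move=> [_ /(_ 0%N)]; rewrite /exp_coeff /= expr0 fact0 divr1 mulr1.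
exact: le_trans (normc_ge0 _).
Qed.

Lemma exp_bounded_le {M r r' c} : r <= r' -> exp_bounded M r c -> exp_bounded M r' c.
Proof.
move=> rr' bc; have M0 := exp_bounded_ge0 bc; have [r0 {}bc] := bc.
split=> [|k]; first exact: le_trans rr'.
apply: le_trans (bc k) _; rewrite ler_wpM2l // ler_wpM2r ?invr_ge0 //.
by rewrite lerXn2r ?nnegrE // (le_trans r0 rr').
Qed.

Lemma normc_cpterm_le {M r c} z k : exp_bounded M r c ->
  normc (c k * z ^+ k) <= M * exp_coeff (r * normc z) k.
Proof.
move=> [_ bc]; rewrite normcM normcX exp_coeffM mulrA.
by rewrite ler_wpM2r ?exprn_ge0 ?normc_ge0.
Qed.

Lemma is_cvg_series_scale (a : R) {u : nat -> R} :
  cvgn (series u) -> cvgn (series (fun k => a * u k)).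
Proof. exact: is_cvg_seriesZ. Qed.

Lemma is_cvg_cpseries {M r c} z : exp_bounded M r c -> cvgn (cpseries c z).
Proof.
move=> bc; have M0 := exp_bounded_ge0 bc; have [r0 _] := bc.
apply: cvg_series_normc.
apply: series_le_cvg (is_cvg_series_scale M (is_cvg_series_exp_coeff (r * normc z))).
- by move=> k; apply: normc_ge0.
- by move=> k; rewrite mulr_ge0 ?exp_coeff_ge0 ?mulr_ge0 ?normc_ge0.
- by move=> k; apply: normc_cpterm_le.
Qed.

Lemma series_exp_coeff_le_lim {x : R} n : 0 <= x ->
  series (exp_coeff x) n <= limn (series (exp_coeff x)).
Proof.
move=> x0; apply: nondecreasing_cvgn_le; last exact: is_cvg_series_exp_coeff.
by apply: nondecreasing_series => k _ _; apply: exp_coeff_ge0.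
Qed.

Lemma cvg_cpsum {M r c} z : exp_bounded M r c -> cpseries c z @ \oo --> cpsum c z.
Proof. exact: is_cvg_cpseries. Qed.

Lemma cpsum_tail_le {M r c} z m : exp_bounded M r c ->
  normc (cpsum c z - cpseries c z m) <=
  M * (limn (series (exp_coeff (r * normc z))) - series (exp_coeff (r * normc z)) m).
Proof.
move=> bc; have M0 := exp_bounded_ge0 bc; have [r0 _] := bc.
have x0 : 0 <= r * normc z by rewrite mulr_ge0 ?normc_ge0.
apply: (normc_cvg_le (F := \oo) (f := fun n => cpseries c z n - cpseries c z m)).
  by apply: cvgB; [exact: (cvg_cpsum z bc) | exact: cvg_cst].
near=> n; have mn : (m <= n)%N by near: n; exists m.
rewrite sub_series_geq //; apply: le_trans (normc_sum _ _ _) _.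
apply: le_trans (ler_sum _ (fun k _ => normc_cpterm_le z k bc)) _.
rewrite -mulr_sumr ler_wpM2l // -sub_series_geq // lerB //.
exact: series_exp_coeff_le_lim.
Unshelve. all: by end_near.
Qed.

Lemma exp_bounded_lim {M r} {cs : nat -> nat -> K} {c} :
  (forall N, exp_bounded M r (cs N)) -> (forall k, cs^~ k @ \oo --> c k) ->
  exp_bounded M r c.
Proof.
move=> bcs cs_c; have [r0 _] := bcs 0%N; split=> // k.
by apply: normc_cvg_le (cs_c k) _; apply: nearW => N; apply: (bcs N).2.
Qed.

Lemma cvg_series_pointwise {T : Type} (F : set_system T) {FF : Filter F}
    (u : T -> nat -> K) (v : nat -> K) m :
  (forall k, (fun t => u t k) @ F --> v k) ->
  (fun t => series (u t) m) @ F --> series v m.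
Proof. by move=> uv; apply: cvg_big => //; exact: add_continuous. Qed.

Lemma cvg_cpsum_coef {M r} (cs : nat -> nat -> K) c z :
  (forall N, exp_bounded M r (cs N)) -> (forall k, cs^~ k @ \oo --> c k) ->
  (fun N => cpsum (cs N) z) @ \oo --> cpsum c z.
Proof.
move=> bcs cs_c; have bc := exp_bounded_lim bcs cs_c.
set S := series (exp_coeff (r * normc z)).
have tail_cvg0 : (fun m => M * (limn S - S m)) @ \oo --> 0.
  rewrite -(mulr0 M) -(subrr (limn S)).
  exact: cvgM (cvg_cst M) (cvgB (cvg_cst _) (is_cvg_series_exp_coeff _)).
apply/cvg_normcP => e e0; have e3 : 0 < e / 3 by rewrite divr_gt0.
have [m /= tail_m] := filter_ex ((cvgrPdist_lt _ _).1 tail_cvg0 _ e3).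
rewrite sub0r normrN in tail_m.
have tail_m' : M * (limn S - S m) <= e / 3 := ltW (le_lt_trans (ler_norm _) tail_m).
have /cvg_normcP head : (fun N => cpseries (cs N) z m) @ \oo --> cpseries c z m.
  exact: cvg_series_pointwise (fun k => cvgM (cs_c k) (cvg_cst (z ^+ k))).
near=> N.
have tail_c := cpsum_tail_le z m bc; have tail_N := cpsum_tail_le z m (bcs N).
have head_N : normc (cpseries c z m - cpseries (cs N) z m) < e / 3.
  by near: N; apply: head.
have -> : cpsum c z - cpsum (cs N) z = (cpsum c z - cpseries c z m)
    + (cpseries c z m - cpseries (cs N) z m) - (cpsum (cs N) z - cpseries (cs N) z m).
  by ring.
apply: le_lt_trans (le_normcD _ _) _; rewrite normcN.
apply: le_lt_trans (lerD (le_normcD _ _) (lexx _)) _.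
rewrite -/S in tail_c tail_N; lra.
Unshelve. all: by end_near.
Qed.

Definition cdiffs c k := k.+1%:R * c k.+1.

Lemma exp_bounded_diffs {M r c} : exp_bounded M r c -> exp_bounded (M * r) r (cdiffs c).
Proof.
move=> bc; have M0 := exp_bounded_ge0 bc; have [r0 {}bc] := bc; split=> // k.
rewrite /cdiffs normcM normc_nat; apply: le_trans (ler_wpM2l (ler0n _ _) (bc k.+1)) _.
have kS : k.+1%:R != 0 :> R by rewrite pnatr_eq0.
have kf : k`!%:R != 0 :> R by rewrite pnatr_eq0 -lt0n fact_gt0.
suff -> : k.+1%:R * (M * exp_coeff r k.+1) = M * r * exp_coeff r k by [].
by rewrite /exp_coeff /= factS natrM exprS; field; rewrite kf nat1r kS.
Qed.

Definition exprD_rem (h z : K) k := (h + z) ^+ k - z ^+ k - h * (k%:R * z ^+ k.-1).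

Lemma exprD_remS h z k :
  exprD_rem h z k.+1 = (h + z) * exprD_rem h z k + h ^+ 2 * (k%:R * z ^+ k.-1).
Proof. by case: k => [|k]; rewrite /exprD_rem /= ?exprS; ring. Qed.

Lemma normc_natr_expr_le z k : normc (k%:R * z ^+ k.-1) <= (2 * (normc z + 1)) ^+ k.
Proof.
have z0 := normc_ge0 z.
rewrite normcM normc_nat normcX exprMn ler_pM ?ler0n ?exprn_ge0 //.
  by rewrite -natrX ler_nat ltnW // ltn_expl.
case: k => [|k] /=; first by rewrite !expr0.
rewrite exprS (@le_trans _ _ ((normc z + 1) ^+ k)) //.
  by rewrite lerXn2r ?nnegrE ?addr_ge0 // lerDl.
by rewrite ler_peMl ?exprn_ge0 ?addr_ge0 // lerDr.
Qed.

Lemma normc_exprD_rem_le h z k : normc h <= 1 ->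
  normc (exprD_rem h z k) <= normc h ^+ 2 * (4 * (normc z + 1)) ^+ k.
Proof.
move=> h1; have z0 := normc_ge0 z; have h0 := normc_ge0 h.
set Q := 4 * (normc z + 1); have Q0 : 0 <= Q by rewrite mulr_ge0 ?addr_ge0.
elim: k => [|k IH].
  by rewrite /exprD_rem !expr0 subrr mul0r mulr0 subr0 normc0 mulr_ge0 ?exprn_ge0.
have hz : normc (h + z) <= normc z + 1.
  by apply: le_trans (le_normcD _ _) _; rewrite addrC lerD2l.
have natr_le : normc (k%:R * z ^+ k.-1) <= Q ^+ k.
  apply: le_trans (normc_natr_expr_le z k) _.
  by rewrite lerXn2r ?nnegrE ?mulr_ge0 ?addr_ge0 // ler_wpM2r ?addr_ge0 // ler_nat.
rewrite exprD_remS; apply: le_trans (le_normcD _ _) _.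
rewrite normcM [X in _ + X]normcM normcX.
apply: le_trans (lerD (ler_pM _ _ hz IH) (ler_wpM2l _ natr_le)) _;
  rewrite ?normc_ge0 ?exprn_ge0 //.
set H := normc h ^+ 2; set W := Q ^+ k; rewrite [Q ^+ k.+1]exprS -/W.
have HW : 0 <= H * W by rewrite mulr_ge0 ?exprn_ge0.
rewrite -subr_ge0 (_ : _ - _ = (3 * normc z + 2) * (H * W)); last by rewrite /Q; ring.
by apply: mulr_ge0 => //; lra.
Qed.

Lemma cpseries_rem c h z n :
  cpseries c (h + z) n.+1 - cpseries c z n.+1 - h * cpseries (cdiffs c) z n =
  \sum_(0 <= k < n.+1) c k * exprD_rem h z k.
Proof.
elim: n => [|n IH].
  by rewrite /cpseries /series /= !big_nat1 big_geq // /exprD_rem; ring.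
by rewrite big_nat_recr //= -IH !cpseriesSr /cdiffs /exprD_rem /=; ring.
Qed.

Lemma normc_cpsum_rem_le {M r c} h z : exp_bounded M r c -> normc h <= 1 ->
  normc (cpsum c (h + z) - cpsum c z - h * cpsum (cdiffs c) z) <=
  normc h ^+ 2 * (M * limn (series (exp_coeff (r * (4 * (normc z + 1)))))).
Proof.
move=> bc h1; have M0 := exp_bounded_ge0 bc; have [r0 bck] := bc.
set Q := 4 * (normc z + 1); have Q0 : 0 <= Q by rewrite mulr_ge0 ?addr_ge0 ?normc_ge0.
apply: (normc_cvg_le (F := \oo) (f := fun n => cpseries c (h + z) n.+1
  - cpseries c z n.+1 - h * cpseries (cdiffs c) z n)).
  apply: cvgB; first apply: cvgB.
  - by move: (cvg_cpsum (h + z) bc); rewrite -cvg_shiftS.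
  - by move: (cvg_cpsum z bc); rewrite -cvg_shiftS.
  - by apply: cvgM; [exact: cvg_cst | exact: cvg_cpsum z (exp_bounded_diffs bc)].
apply: nearW => n; rewrite cpseries_rem; apply: le_trans (normc_sum _ _ _) _.
have term_le k :
    normc (c k * exprD_rem h z k) <= normc h ^+ 2 * (M * exp_coeff (r * Q) k).
  have -> : normc h ^+ 2 * (M * exp_coeff (r * Q) k) =
      M * exp_coeff r k * (normc h ^+ 2 * Q ^+ k) by rewrite exp_coeffM; ring.
  by rewrite normcM ler_pM ?normc_ge0 ?normc_exprD_rem_le.
apply: le_trans (ler_sum _ (fun k _ => term_le k)) _.
rewrite -!mulr_sumr ler_wpM2l ?exprn_ge0 ?normc_ge0 // ler_wpM2l //.
exact: series_exp_coeff_le_lim _ (mulr_ge0 r0 Q0).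
Qed.

Lemma derive1_cpsum {M r c} z : exp_bounded M r c ->
  derive1 (cpsum c) z = cpsum (cdiffs c) z.
Proof.
move=> bc; have M0 := exp_bounded_ge0 bc; have [r0 _] := bc.
set x := r * (4 * (normc z + 1)).
have x0 : 0 <= x by rewrite mulr_ge0 ?mulr_ge0 ?addr_ge0 ?normc_ge0.
set B := M * limn (series (exp_coeff x)).
have B0 : 0 <= B.
  rewrite mulr_ge0 // (le_trans _ (series_exp_coeff_le_lim 0 x0)) //.
  by rewrite /series /= big_geq.
apply: cvg_lim => //; apply/cvg_normcP => e e0.
set d := Num.min 1 (e / (B + 1)).
have d0 : 0 < d by rewrite lt_min ltr01 divr_gt0 // ltr_wpDl.
have near_d : \forall h \near (0 : K)^', normc h < d.
  have := @dnbhs0_lt _ K d%:C; rewrite ltcR => /(_ d0).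
  by apply: filterS => h; rewrite normr_normc ltcR.
near=> h.
have h0 : h != 0 by near: h; exact: nbhs_dnbhs_neq.
have hd : normc h < d by near: h.
have h1 : normc h <= 1 by rewrite ltW // (lt_le_trans hd) // ge_min lexx.
have hB : normc h * (B + 1) < e.
  by rewrite -ltr_pdivlMr ?ltr_wpDl // (lt_le_trans hd) // ge_min lexx orbT.
have hpos : 0 < normc h.
  by rewrite lt_def normc_ge0 andbT; apply: contra h0 => /eqP/eq0_normc ->.
have rem_le := normc_cpsum_rem_le h z bc h1.
have -> : cpsum (cdiffs c) z - h^-1 *: (cpsum c (h + z) - cpsum c z) =
    - (h^-1 * (cpsum c (h + z) - cpsum c z - h * cpsum (cdiffs c) z)).
  by rewrite -[h^-1 *: _]/(h^-1 * _); field.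
rewrite normcN normcM normcV ltr_pdivrMl //.
apply: le_lt_trans rem_le _; rewrite -/x -/B; nra.
Unshelve. all: by end_near.
Qed.

Lemma cpsum_const_term c z : (forall k, c k.+1 * z ^+ k.+1 = 0) -> cpsum c z = c 0%N.
Proof.
move=> c_z0; apply: cvg_lim => //; rewrite -cvg_shiftS.
suff -> : [sequence cpseries c z n.+1]_n = fun=> c 0%N by exact: cvg_cst.
apply: funext => n /=; rewrite /cpseries /series /= big_nat_recl // expr0 mulr1.
by rewrite big1 ?addr0.
Qed.

Lemma cpsum0 c : cpsum c 0 = c 0%N.
Proof. by apply: cpsum_const_term => k; rewrite expr0n mulr0. Qed.

Lemma derive1n_cpsum0 {M r c} k : exp_bounded M r c ->
  derive1n k (cpsum c) 0 = k`!%:R * c k.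
Proof.
elim: k M c => [|k IH] M c bc; first by rewrite derive1n0 cpsum0 fact0 mul1r.
rewrite /derive1n iterSr -/(derive1n k _).
have -> : derive1 (cpsum c) = cpsum (cdiffs c).
  by apply: funext => z; exact: derive1_cpsum z bc.
by rewrite (IH _ _ (exp_bounded_diffs bc)) /cdiffs factS natrM mulrA [_ * k.+1%:R]mulrC.
Qed.

Lemma normb_cpsum_le {M b c} : 0 < b -> exp_bounded M b c ->
  (normb b (cpsum c) <= M%:E)%E.
Proof.
move=> b0 bc; apply: ge_ereal_sup => _ [k _ <-]; rewrite lee_fin.
rewrite (derive1n_cpsum0 k bc) normcM normc_nat.
have kf : k`!%:R != 0 :> R by rewrite pnatr_eq0 -lt0n fact_gt0.
have -> : M = b ^- k * (k`!%:R * (M * exp_coeff b k)).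
  by rewrite /exp_coeff /=; field; rewrite kf expf_neq0 // gt_eqF.
by rewrite ler_pM2l ?invr_gt0 ?exprn_gt0 // ler_pM2l ?ltr0n ?fact_gt0 // bc.2.
Qed.

End ExpBoundedSeries.

Section CoefficientOperations.
Context {R : realType}.
Local Notation K := (CC R).
Implicit Types (c : nat -> K) (z : K) (M r : R).

Definition cshift c k := if k is k'.+1 then c k' else 0.

Definition cmul1X (b : K) c k := c k + b * cshift c k.

Lemma cpseries_shiftS c z n : cpseries (cshift c) z n.+1 = z * cpseries c z n.
Proof.
elim: n => [|n IH]; first by rewrite /cpseries /series /= big_nat1 big_geq // mul0r mulr0.
by rewrite cpseriesSr IH [in RHS]cpseriesSr /= exprS; ring.
Qed.

Lemma cvg_cpseries_shift {c z} {l : K} :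
  cpseries c z @ \oo --> l -> cpseries (cshift c) z @ \oo --> z * l.
Proof.
move=> cl; rewrite -cvg_shiftS.
suff -> : [sequence cpseries (cshift c) z n.+1]_n = fun n => z * cpseries c z n.
  exact: cvgM (cvg_cst z) cl.
by apply: funext => n; rewrite /= cpseries_shiftS.
Qed.

Lemma cshiftnE m c k : iter m cshift c k = if (m <= k)%N then c (k - m)%N else 0.
Proof.
elim: m k => [|m IH] k; first by rewrite subn0.
by case: k => [|k] //=; rewrite IH ltnS subSS.
Qed.

Lemma cvg_cpseries_shiftn m {c z} {l : K} :
  cpseries c z @ \oo --> l -> cpseries (iter m cshift c) z @ \oo --> z ^+ m * l.
Proof.
move=> cl; elim: m => [|m IH]; first by rewrite expr0 mul1r.
by rewrite iterS exprS -mulrA; apply: cvg_cpseries_shift.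
Qed.

Lemma cvg_cpseries_scale (a : K) {c z} {l : K} :
  cpseries c z @ \oo --> l -> cpseries (fun k => a * c k) z @ \oo --> a * l.
Proof.
move=> cl; suff -> : cpseries (fun k => a * c k) z = fun n => a * cpseries c z n.
  exact: cvgM (cvg_cst a) cl.
apply: funext => n; rewrite /cpseries /series /= big_distrr /=.
by apply: eq_bigr => k _; rewrite mulrA.
Qed.

Lemma cvg_cpseries_mul1X b {c z} {l : K} :
  cpseries c z @ \oo --> l -> cpseries (cmul1X b c) z @ \oo --> l * (1 + b * z).
Proof.
move=> cl; suff -> : cpseries (cmul1X b c) z =
    fun n => cpseries c z n + b * cpseries (cshift c) z n.
  rewrite (_ : l * _ = l + b * (z * l)); last by ring.
  exact: cvgD cl (cvgM (cvg_cst b) (cvg_cpseries_shift cl)).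
apply: funext => n; rewrite /cpseries /series /= big_distrr -big_split /=.
by apply: eq_bigr => k _; rewrite /cmul1X; ring.
Qed.

Lemma exprS_addr_ge (s t : R) n : 0 <= s -> 0 <= t ->
  s ^+ n.+1 + n.+1%:R * t * s ^+ n <= (s + t) ^+ n.+1.
Proof.
move=> s0 t0; elim: n => [|n IH]; first by rewrite expr0 expr1 mulr1 mul1r.
apply: le_trans (ler_wpM2l (addr_ge0 s0 t0) IH).
rewrite -subr_ge0 (_ : _ - _ = n.+1%:R * t ^+ 2 * s ^+ n); last first.
  by rewrite !exprS -[n.+2]addn1 natrD; ring.
by rewrite mulr_ge0 ?mulr_ge0 ?exprn_ge0.
Qed.

Lemma exp_bounded_mul1X s t b c : 0 <= t -> normc b <= t ->
  exp_bounded 1 s c -> exp_bounded 1 (s + t) (cmul1X b c).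
Proof.
move=> t0 bt [s0 bc]; split=> [|[|k]]; first by rewrite addr_ge0.
  rewrite /cmul1X /= mulr0 addr0; apply: le_trans (bc 0%N) _.
  by rewrite /exp_coeff /= !expr0.
rewrite /cmul1X /=; apply: le_trans (le_normcD _ _) _; rewrite normcM.
have := bc k; have := bc k.+1; rewrite !mul1r => ck1 ck.
apply: le_trans (lerD ck1 (ler_pM (normc_ge0 _) (normc_ge0 _) bt ck)) _.
have kf : k`!%:R != 0 :> R by rewrite pnatr_eq0 -lt0n fact_gt0.
have -> : exp_coeff s k.+1 + t * exp_coeff s k =
    (s ^+ k.+1 + k.+1%:R * t * s ^+ k) / k.+1`!%:R.
  by rewrite /exp_coeff /= factS natrM; field; rewrite kf nat1r pnatr_eq0.
by rewrite /exp_coeff /= ler_wpM2r ?invr_ge0 ?ler0n ?exprS_addr_ge.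
Qed.

Lemma exp_bounded_scale (a : K) C M r c : normc a <= C ->
  exp_bounded M r c -> exp_bounded (C * M) r (fun k => a * c k).
Proof.
move=> aC bc; have M0 := exp_bounded_ge0 bc; have [r0 {}bc] := bc; split=> // k.
by rewrite normcM -mulrA ler_pM ?normc_ge0.
Qed.

Lemma exp_coeff_subn_le {a b : R} {m k} : 0 <= a -> a < b -> (m <= k)%N ->
  exp_coeff a (k - m)%N <= m`!%:R / (b - a) ^+ m * exp_coeff b k.
Proof.
move=> a0 ab mk; have ba : 0 < b - a by rewrite subr_gt0.
have binom_term : a ^+ (k - m)%N * (b - a) ^+ m * 'C(k, m)%:R <= b ^+ k.
  have -> : b ^+ k = (a + (b - a)) ^+ k by rewrite addrC subrK.
  rewrite [X in _ <= X]exprDn (bigD1 (Ordinal (mk : (m < k.+1)%N))) //=.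
  rewrite mulr_natr lerDl sumr_ge0 // => i _.
  by rewrite mulrn_wge0 // mulr_ge0 ?exprn_ge0 // ltW.
have Cpos : 0 < 'C(k, m)%:R :> R by rewrite ltr0n bin_gt0.
have fpos n : 0 < n`!%:R :> R by rewrite ltr0n fact_gt0.
have dpos : 0 < (b - a) ^+ m by rewrite exprn_gt0.
rewrite /exp_coeff /= -(bin_fact mk) !natrM.
set d := (b - a) ^+ m in binom_term dpos *; set C := 'C(k, m)%:R in binom_term Cpos *.
have -> : m`!%:R / d * (b ^+ k / (C * (m`!%:R * (k - m)%N`!%:R))) =
    b ^+ k / (d * C * (k - m)%N`!%:R).
  by field; rewrite !gt_eqF ?fpos.
have -> : a ^+ (k - m)%N / (k - m)%N`!%:R =
    a ^+ (k - m)%N * d * C / (d * C * (k - m)%N`!%:R).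
  by field; rewrite !gt_eqF ?fpos.
by rewrite ler_wpM2r // invr_ge0 ltW // !mulr_gt0.
Qed.

Lemma fact_divX_le (d : R) m l : 0 < d -> (m <= l)%N ->
  m`!%:R / d ^+ m <= l`!%:R * (1 + d^-1) ^+ l.
Proof.
move=> d0 ml; have dV0 : 0 < d^-1 by rewrite invr_gt0.
rewrite -exprVn; apply: ler_pM.
- exact: ler0n.
- exact: exprn_ge0 (ltW dV0).
- by rewrite ler_nat leq_fact.
apply: (@le_trans _ _ ((1 + d^-1) ^+ m)).
  by rewrite lerXn2r ?nnegrE ?addr_ge0 ?(ltW dV0) // lerDr.
by rewrite ler_eXn2l // ltrDl.
Qed.

Lemma exp_bounded_shiftn M (a b : R) c m l : a < b -> (m <= l)%N ->
  exp_bounded M a c ->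
  exp_bounded (M * (l`!%:R * (1 + (b - a)^-1) ^+ l)) b (iter m cshift c).
Proof.
move=> ab ml bc; have M0 := exp_bounded_ge0 bc; have [a0 {}bc] := bc.
have b0 : 0 <= b by rewrite ltW // (le_lt_trans a0).
have shift_le : m`!%:R / (b - a) ^+ m <= l`!%:R * (1 + (b - a)^-1) ^+ l.
  by rewrite fact_divX_le ?subr_gt0.
split=> // k; rewrite cshiftnE; case: ifP => mk.
  apply: le_trans (bc _) _; rewrite -mulrA; apply: ler_wpM2l => //.
  apply: le_trans (exp_coeff_subn_le a0 ab mk) _.
  by apply: ler_wpM2r; rewrite ?exp_coeff_ge0.
by rewrite normc0 !mulr_ge0 ?exp_coeff_ge0 ?ler0n ?exprn_ge0
  ?addr_ge0 ?invr_ge0 ?subr_ge0 ?(ltW ab).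
Qed.

End CoefficientOperations.

Section InfiniteProduct.
Context {R : realType}.
Local Notation K := (CC R).
Implicit Types (c : nat -> K) (z : K) (s : R).

Fixpoint cmul_prod c (be : nat -> R) N :=
  if N is N'.+1 then cmul1X (be N')%:C (cmul_prod c be N') else c.

Lemma cvg_cpseries_prod be N {c z} {l : K} : cpseries c z @ \oo --> l ->
  cpseries (cmul_prod c be N) z @ \oo --> l * \prod_(j < N) (1 + (be j)%:C * z).
Proof.
move=> cl; elim: N => [|N IH]; first by rewrite big_ord0 mulr1.
by rewrite big_ord_recr /= mulrA; apply: cvg_cpseries_mul1X.
Qed.

Lemma exp_bounded_prod {s} (be : nat -> R) N {c} :
  (forall j, 0 <= be j) -> exp_bounded 1 s c ->
  exp_bounded 1 (s + \sum_(j < N) be j) (cmul_prod c be N).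
Proof.
move=> be0 bc; elim: N => [|N IH]; first by rewrite big_ord0 addr0.
rewrite big_ord_recr /= addrA.
by apply: exp_bounded_mul1X; rewrite ?normc_real ?ger0_norm.
Qed.

Variable be : nat -> R.
Hypothesis be_ge0 : forall j, 0 <= be j.
Hypothesis cvg_be : cvgn (series be).

Lemma partial_sum_le_mu1 N : \sum_(j < N) be j <= mu1 be.
Proof.
have := nondecreasing_cvgn_le (nondecreasing_series (fun k _ _ => be_ge0 k)) cvg_be N.
by rewrite /series /= big_mkord.
Qed.

Lemma exp_bounded_prod_mu1 {s c} N : exp_bounded 1 s c ->
  exp_bounded 1 (s + mu1 be) (cmul_prod c be N).
Proof.
move=> bc; apply: exp_bounded_le (exp_bounded_prod be N be_ge0 bc).
by rewrite lerD2l partial_sum_le_mu1.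
Qed.

(* The N-th increment of the k-th coefficient is beta_N times a coefficient
   bounded uniformly in N, so the increments are summable. *)
Lemma is_cvg_cmul_prod {s c} k : exp_bounded 1 s c -> cvgn (fun N => cmul_prod c be N k).
Proof.
move=> bc; set a := s + mu1 be; set u := fun N => cmul_prod c be N k.
have a0 : 0 <= a by have [] := exp_bounded_prod_mu1 0 bc.
have step N : normc (telescope u N) <= exp_coeff a k.-1 * be N.
  have -> : telescope u N = (be N)%:C * cshift (cmul_prod c be N) k.
    by rewrite /telescope /u /= /cmul1X addrAC subrr add0r.
  rewrite normcM normc_real ger0_norm // mulrC ler_wpM2r //.
  case: k {u} => [|k]; first by rewrite normc0 exp_coeff_ge0.
  by have [_ /(_ k)] := exp_bounded_prod_mu1 N bc; rewrite mul1r.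
have cvg_tel : cvgn (series (telescope u)).
  apply: cvg_series_normc; apply: series_le_cvg (is_cvg_series_scale _ cvg_be) => //.
  - by move=> N; exact: normc_ge0.
  - by move=> N; rewrite mulr_ge0 ?exp_coeff_ge0.
rewrite (_ : u = fun N => u 0%N + series (telescope u) N); last first.
  by apply: funext => N; rewrite -eq_sum_telescope.
by apply/cvg_ex; eexists; apply: cvgD (cvg_cst _) cvg_tel.
Qed.

Definition prod_coef c k := limn (fun N => cmul_prod c be N k).

Lemma exp_bounded_prod_coef {s c} : exp_bounded 1 s c ->
  exp_bounded 1 (s + mu1 be) (prod_coef c).
Proof.
move=> bc; apply: exp_bounded_lim (fun N => exp_bounded_prod_mu1 N bc) _.
exact: (fun k => is_cvg_cmul_prod k bc).
Qed.

Lemma cvg_cpsum_cmul_prod {s c} z : exp_bounded 1 s c ->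
  (fun N => cpsum (cmul_prod c be N) z) @ \oo --> cpsum (prod_coef c) z.
Proof.
move=> bc; apply: cvg_cpsum_coef (fun N => exp_bounded_prod_mu1 N bc) _.
exact: (fun k => is_cvg_cmul_prod k bc).
Qed.

Lemma cpsum_cmul_prod {s c} z N : exp_bounded 1 s c ->
  cpsum (cmul_prod c be N) z = cpsum c z * \prod_(j < N) (1 + (be j)%:C * z).
Proof.
by move=> bc; apply: cvg_lim => //; apply: cvg_cpseries_prod; exact: cvg_cpsum z bc.
Qed.

Definition cone k : K := if k is 0 then 1 else 0.

Lemma exp_bounded_cone : exp_bounded 1 0 cone.
Proof.
split=> // -[|k]; rewrite mul1r.
  by rewrite -[cone 0]/1 normc1 /exp_coeff /= expr0 fact0 divr1.
by rewrite -[cone k.+1]/0 normc0 exp_coeff_ge0.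
Qed.

Lemma cpsum_cone z : cpsum cone z = 1.
Proof. by rewrite cpsum_const_term // => k; rewrite mul0r. Qed.

Lemma cvg_infprod z : (fun N => \prod_(j < N) (1 + (be j)%:C * z)) @ \oo -->
  infprod (fun j => 1 + (be j)%:C * z).
Proof.
apply: (cvgP (cpsum (prod_coef cone) z)).
have := cvg_cpsum_cmul_prod z exp_bounded_cone.
by under eq_fun do rewrite (cpsum_cmul_prod z _ exp_bounded_cone) cpsum_cone mul1r.
Qed.

Lemma cpsum_prod_coef {s c} z : exp_bounded 1 s c ->
  cpsum (prod_coef c) z = cpsum c z * infprod (fun j => 1 + (be j)%:C * z).
Proof.
move=> bc; have := cvg_cpsum_cmul_prod z bc.
under eq_fun do rewrite (cpsum_cmul_prod z _ bc).
by move=> /cvg_lim <- //; apply: cvg_lim => //; exact: cvgM (cvg_cst _) (cvg_infprod z).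
Qed.

End InfiniteProduct.

Section LaguerrePolyaClass.
Context {R : realType}.
Local Notation K := (CC R).

Definition cexp_coef (al : R) k : K := al%:C ^+ k / k`!%:R.

Lemma exp_bounded_cexp_coef al : exp_bounded 1 `|al| (cexp_coef al).
Proof.
split=> // k; rewrite mul1r /cexp_coef normcM normcX normc_real normcV normc_nat.
by rewrite /exp_coeff.
Qed.

Lemma cpsum_cexp_coef al z : cpsum (cexp_coef al) z = cexp (al%:C * z).
Proof.
rewrite /cpsum /cexp /cpseries; congr (limn (series _)); apply: funext => k /=.
by rewrite /cexp_coef exprMn; ring.
Qed.

Lemma Lclass_funE (C0 : K) (l : nat) (al : R) (be : nat -> R) :
  (forall j, 0 <= be j) -> cvgn (series be) ->
  Lclass_fun C0 l al be =
  cpsum (fun k => C0 * iter l cshift (prod_coef be (cexp_coef al)) k).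
Proof.
move=> be0 cbe; apply: funext => z; have bexp := exp_bounded_cexp_coef al.
rewrite /Lclass_fun -cpsum_cexp_coef -mulrA -(cpsum_prod_coef be be0 cbe z bexp).
apply/esym/cvg_lim => //; rewrite -mulrA.
apply/cvg_cpseries_scale/cvg_cpseries_shiftn.
exact: cvg_cpsum z (exp_bounded_prod_coef be be0 cbe bexp).
Qed.

End LaguerrePolyaClass.

Theorem proposition1p3 (R : realType)
    (Cn : nat -> CC R) (ln : nat -> nat) (alphan : nat -> R)
    (betan : nat -> nat -> R)
    (hbeta : forall n, L_beta (betan n))
    (a C : R) (l : nat) (ha : 0 < a) (hC : 0 < C)
    (hab : forall n, `|alphan n| + mu1 (betan n) <= a)
    (hCn : forall n, Normc.normc (Cn n : R[i]) <= C)
    (hln : forall n, (ln n <= l)%N) :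
  forall b : R, a < b ->
    exists M : R, forall n : nat,
      (normb b (Lclass_fun (Cn n) (ln n) (alphan n) (betan n)) <= M%:E)%E.
Proof.
move=> b ab; exists (C * (1 * (l`!%:R * (1 + (b - a)^-1) ^+ l))) => n.
have [be0 [_ cbe]] := hbeta n.
rewrite Lclass_funE //; apply: normb_cpsum_le; first exact: lt_trans ab.
apply: exp_bounded_scale (hCn n) _; apply: exp_bounded_shiftn ab (hln n) _.
exact: exp_bounded_le (hab n) (exp_bounded_prod_coef _ be0 cbe (exp_bounded_cexp_coef _)).
Qed.
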